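(* For all $\alpha>1$ and all real numbers $0<a<b$, \[ \frac{(b+1)^\alpha-a^\alpha}{b^\alpha-a^\alpha}\ge\frac{(b+1)^{\alpha-1}-a^{\alpha-1}}{b^{\alpha-1}-a^{\alpha-1}}. \] *)

(* real powers via Rpower (x^y = exp (y ln x), used only for x > 0). *)
From Stdlib Require Import Reals.

(* With K = alpha b / (alpha - 1), the function h x = x^alpha - K x^(alpha-1) has
   derivative alpha x^(alpha-2) (x - b), so it attains its minimum on (0, +oo) at b.
   Hence the increments of x^alpha and x^(alpha-1) compare through K: on [a, b] the
   first is at most K times the second, on [b, b+1] at least K times. Adding the two
   increments, as in a mediant, gives the inequality. *)
From Stdlib Require Import Reals Lra Psatz.
Open Scope R_scope.

Lemma min_of_derive_sign (f f' : R -> R) (l m : R) :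
  (forall c, l < c -> derivable_pt_lim f c (f' c)) ->
  (forall c, l < c < m -> f' c <= 0) ->
  (forall c, m < c -> 0 <= f' c) ->
  l < m -> forall x, l < x -> f m <= f x.
Proof.
  intros hderiv hdecr hincr hm x hx.
  destruct (Rtotal_order x m) as [hxm | [-> | hmx]]; [| lra |].
  - destruct (MVT_cor2 f f' x m hxm) as [c [hdiff hc]].
    + intros c hc; apply hderiv; lra.
    + assert (f' c <= 0) by (apply hdecr; lra); nra.
  - destruct (MVT_cor2 f f' m x hmx) as [c [hdiff hc]].
    + intros c hc; apply hderiv; lra.
    + assert (0 <= f' c) by (apply hincr; lra); nra.
Qed.

Lemma increment_ratio_le (f g : R -> R) (x y z K : R) :
  g x < g y <= g z -> f x < f y ->
  f y - f x <= K * (g y - g x) -> K * (g z - g y) <= f z - f y ->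
  (g z - g x) / (g y - g x) <= (f z - f x) / (f y - f x).
Proof.
  intros hg hf hxy hyz.
  apply Rmult_le_reg_r with ((g y - g x) * (f y - f x)); [nra |].
  replace ((g z - g x) / (g y - g x) * ((g y - g x) * (f y - f x)))
    with ((g z - g x) * (f y - f x)) by (field; lra).
  replace ((f z - f x) / (f y - f x) * ((g y - g x) * (f y - f x)))
    with ((f z - f x) * (g y - g x)) by (field; lra).
  nra.
Qed.

Section PowerMinusPower.

Variables alpha b : R.
Hypotheses (halpha : 1 < alpha) (hb : 0 < b).

Let K := alpha * b / (alpha - 1).

Let h (x : R) := Rpower x alpha - K * Rpower x (alpha - 1).

Lemma derivable_pt_lim_power_minus_power (c : R) : 0 < c ->
  derivable_pt_lim h c (alpha * Rpower c (alpha - 1 - 1) * (c - b)).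
Proof.
  intros hc.
  replace (alpha * Rpower c (alpha - 1 - 1) * (c - b)) with
    (alpha * Rpower c (alpha - 1) - K * ((alpha - 1) * Rpower c (alpha - 1 - 1))).
  - apply derivable_pt_lim_minus.
    + apply derivable_pt_lim_power; lra.
    + apply derivable_pt_lim_scal, derivable_pt_lim_power; lra.
  - replace (alpha - 1) with ((alpha - 1 - 1) + 1) at 1 by ring.
    rewrite Rpower_plus, Rpower_1 by lra.
    unfold K; field; lra.
Qed.

Lemma power_minus_power_min (x : R) : 0 < x -> h b <= h x.
Proof.
  intros hx.
  assert (derive_sign : forall c, 0 < alpha * Rpower c (alpha - 1 - 1))
    by (intros c; apply Rmult_lt_0_compat; [lra | apply exp_pos]).
  apply (min_of_derive_sign h (fun c => alpha * Rpower c (alpha - 1 - 1) * (c - b)) 0).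
  - exact derivable_pt_lim_power_minus_power.
  - intros c hc; pose proof (derive_sign c); nra.
  - intros c hc; pose proof (derive_sign c); nra.
  - exact hb.
  - exact hx.
Qed.

Lemma power_increments_compare (a c : R) : 0 < a -> 0 < c ->
  Rpower b alpha - Rpower a alpha <= K * (Rpower b (alpha - 1) - Rpower a (alpha - 1)) /\
  K * (Rpower c (alpha - 1) - Rpower b (alpha - 1)) <= Rpower c alpha - Rpower b alpha.
Proof.
  intros ha hc.
  pose proof (power_minus_power_min a ha); pose proof (power_minus_power_min c hc).
  unfold h in *; split; lra.
Qed.

End PowerMinusPower.

Theorem lemma2 (alpha a b : R) (halpha : 1 < alpha) (ha : 0 < a) (hab : a < b) :
  (Rpower (b + 1) alpha - Rpower a alpha) / (Rpower b alpha - Rpower a alpha)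
  >= (Rpower (b + 1) (alpha - 1) - Rpower a (alpha - 1))
     / (Rpower b (alpha - 1) - Rpower a (alpha - 1)).
Proof.
  apply Rle_ge.
  destruct (power_increments_compare alpha b halpha ltac:(lra) a (b + 1) ha ltac:(lra))
    as [hab_incr hb1_incr].
  apply (increment_ratio_le (fun x => Rpower x alpha) (fun x => Rpower x (alpha - 1))
           a b (b + 1) (alpha * b / (alpha - 1))).
  - split; [| apply Rlt_le]; apply Rlt_Rpower_l; lra.
  - apply Rlt_Rpower_l; lra.
  - exact hab_incr.
  - exact hb1_incr.
Qed.
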